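(* Let $\overrightarrow{W}$ be a Morse sequence on a simplicial complex $K$, with reference map $\curlywedge$ and coreference map $\curlyvee$. (1) If $z,z'\in Z_p(K)$ and $\curlywedge(z)=\curlywedge(z')$, then $z+z'\in B_p(K)$, i.e. $z$ and $z'$ are homologous. (2) If $z,z'\in Z^p(K)$ and $\curlyvee(z)=\curlyvee(z')$, then $z+z'\in B^p(K)$, i.e. $z$ and $z'$ are cohomologous.
   Context: A simplicial complex $K$ is a finite collection of non-empty finite sets closed under taking non-empty subsets; $\dim\sigma=|\sigma|-1$, $K^{(p)}$ the set of $p$-simplices. A pair $(\sigma,\tau)$ with $\sigma\subsetneq\tau$ is a free pair for $K$ if $\tau$ is the only simplex other than $\sigma$ containing $\sigma$; $K$ is then an elementary expansion of $K\setminus\{\sigma,\tau\}$. If $\nu$ is a facet (maximal simplex) of $K$, $K$ is an elementary filling of $K\setminus\{\nu\}$. A Morse sequence on $K$ is a sequence $\langle\emptyset=K_0,\dots,K_k=K\rangle$ with each $K_i$ an elementary expansion or filling of $K_{i-1}$; simplices added by fillings are critical; for an expansion $K_i=K_{i-1}\cup\{\sigma,\tau\}$, $\sigma\subset\tau$, $\sigma$ is lower regular and $\tau$ upper regular. $K[p]$ is the $\mathbb{Z}_2$-vector space of subsets of $K^{(p)}$ (sum = symmetric difference, $0=\emptyset$). For $\sigma\in K^{(p)}$, $\partial(\sigma)=\{\tau\in K^{(p-1)}:\tau\subset\sigma\}$, $\delta(\sigma)=\{\tau\in K^{(p+1)}:\sigma\subset\tau\}$, extended linearly to $\partial_p:K[p]\to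 K[p-1]$, $\delta_p:K[p]\to K[p+1]$; $Z_p(K)=\ker\partial_p$, $B_p(K)=\operatorname{im}\partial_{p+1}$, $Z^p(K)=\ker\delta_p$, $B^p(K)=\operatorname{im}\delta_{p-1}$. The reference map $\curlywedge$ is the unique map assigning to each $p$-simplex a set of critical $p$-simplices, extended linearly (mod 2), with $\curlywedge(\nu)=\{\nu\}$ for critical $\nu$ and $\curlywedge(\tau)=0=\curlywedge(\partial(\tau))$ for upper regular $\tau$; the coreference map $\curlyvee$ is the unique such map with $\curlyvee(\nu)=\{\nu\}$ for critical $\nu$ and $\curlyvee(\sigma)=0=\curlyvee(\delta(\sigma))$ for lower regular $\sigma$. *)

From mathcomp Require Import all_boot.
Set Implicit Arguments. Unset Strict Implicit. Unset Printing Implicit Defensive.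

Section Defs.
Variable V : finType.
Implicit Types (K c : {set {set V}}) (s t nu : {set V}).

Definition is_complex K : Prop :=
  set0 \notin K /\
  forall s t, s \in K -> t \subset s -> t != set0 -> t \in K.

Definition Ksize K n : {set {set V}} := [set s in K | #|s| == n].
Definition Kdim K p : {set {set V}} := Ksize K p.+1.

(* mod-2 linear extension of F : simplex -> set of simplices, applied to the
   chain c (a set of simplices): x is in the result iff it occurs in an odd
   number of the F s, s in c  (i.e. the Z_2 sum of the F s). *)
Definition lin (F : {set V} -> {set {set V}}) c : {set {set V}} :=
  [set x | odd #|[set s in c | x \in F s]|].

Definition bd1 K s : {set {set V}} := [set t in K | (t \subset s) && (#|t| == #|s| - 1)].
Definition cobd1 K s : {set {set V}} := [set t in K | (s \subset t) && (#|t| == #|s|.+1)].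
Definition bd K c := lin (bd1 K) c.
Definition cobd K c := lin (cobd1 K) c.

Definition chain_add c c' : {set {set V}} := (c :\: c') :|: (c' :\: c).

Definition Zp K p c : Prop := c \subset Kdim K p /\ bd K c = set0.
Definition Bp K p c : Prop := c \subset Kdim K p /\
  exists d : {set {set V}}, d \subset Kdim K p.+1 /\ bd K d = c.
Definition coZp K p c : Prop := c \subset Kdim K p /\ cobd K c = set0.
(* B^p = im delta_{p-1}; the (p-1)-simplices are those with p vertices
   (none when p = 0, so B^0 = 0) *)
Definition coBp K p c : Prop := c \subset Kdim K p /\
  exists d : {set {set V}}, d \subset Ksize K p /\ cobd K d = c.

(* A step of a Morse sequence: filling by nu (inl nu) or expansion by a
   pair (sigma, tau) (inr (sigma, tau)). *)
Definition step := ({set V} + ({set V} * {set V}))%type.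
Definition added (x : step) : {set {set V}} :=
  match x with inl nu => [set nu] | inr (s, t) => [set s; t] end.
Definition Kpref (W : seq step) (i : nat) : {set {set V}} :=
  \bigcup_(x <- take i W) added x.

Definition facet K nu : Prop := nu \in K /\ forall t, t \in K -> nu \subset t -> t = nu.
Definition free_pair K s t : Prop :=
  s \proper t /\ s \in K /\ t \in K /\
  forall u, u \in K -> s \subset u -> u = s \/ u = t.

Definition Morse_seq (W : seq step) K : Prop :=
  Kpref W (size W) = K /\
  forall i, i < size W ->
    let Kp := Kpref W i in let Kn := Kpref W i.+1 in
    is_complex Kn /\
    match nth (inl set0) W i with
    | inl nu => facet Kn nu /\ Kp = Kn :\ nu
    | inr (s, t) => free_pair Kn s t /\ Kp = Kn :\: [set s; t]
    end.

Definition critical (W : seq step) nu : bool := inl nu \in W.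
Definition lower_regular (W : seq step) s : bool := [exists t, inr (s, t) \in W].
Definition upper_regular (W : seq step) t : bool := [exists s, inr (s, t) \in W].

Definition is_reference (W : seq step) K (ref : {set V} -> {set {set V}}) : Prop :=
  (forall s, s \in K -> ref s \subset [set nu in Ksize K #|s| | critical W nu]) /\
  (forall nu, nu \in K -> critical W nu -> ref nu = [set nu]) /\
  (forall t, t \in K -> upper_regular W t -> ref t = set0 /\ lin ref (bd1 K t) = set0).

Definition is_coreference (W : seq step) K (coref : {set V} -> {set {set V}}) : Prop :=
  (forall s, s \in K -> coref s \subset [set nu in Ksize K #|s| | critical W nu]) /\
  (forall nu, nu \in K -> critical W nu -> coref nu = [set nu]) /\
  (forall s, s \in K -> lower_regular W s -> coref s = set0 /\ lin coref (cobd1 K s) = set0).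

End Defs.

From mathcomp Require Import all_boot zify.
Set Implicit Arguments. Unset Strict Implicit. Unset Printing Implicit Defensive.

(* A Morse sequence is a filtration set0 = K_0 <= ... <= K_n = K whose steps
   add either a critical simplex nu or a free pair (sigma, tau).  Induct along
   it: a cycle c in K_(i+1) with zero reference cannot contain nu (its
   reference would contain nu, while the reference of K_i stays in K_i), nor
   tau (sigma would lie in its boundary, tau being the only coface of sigma);
   if it contains sigma, then c + bd tau lies in K_i and is again a cycle with
   zero reference, and a primitive of it plus tau is a primitive of c.
   A primitive is finally cut down to the right dimension, as bd lowers
   dimension by exactly one. *)

Section Chains.
Variable V : finType.
Implicit Types (a b c A B : {set {set V}}) (s t : {set V}) (G : {set V} -> {set {set V}}).

Lemma mem_chain_add a b s : (s \in chain_add a b) = (s \in a) (+) (s \in b).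
Proof. by rewrite !inE; case: (s \in a); case: (s \in b). Qed.

Lemma chain_addxx a : chain_add a a = set0.
Proof. by apply/setP => s; rewrite mem_chain_add addbb inE. Qed.

Lemma chain_addK a b : chain_add (chain_add a b) b = a.
Proof. by apply/setP => s; rewrite !mem_chain_add -addbA addbb addbF. Qed.

Lemma chain_add_eq0 a b : chain_add a b = set0 -> a = b.
Proof.
move/setP=> e; apply/setP => s; move: (e s).
by rewrite mem_chain_add inE; case: (s \in a); case: (s \in b).
Qed.

Lemma chain_add_sub a b A : a \subset A -> b \subset A -> chain_add a b \subset A.
Proof.
move=> aA bA; rewrite subUset.
by rewrite (subset_trans (subsetDl _ _) aA) (subset_trans (subsetDl _ _) bA).
Qed.

Lemma chain_add1D a s : s \in a -> chain_add [set s] (a :\ s) = a.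
Proof.
move=> sa; apply/setP => t; rewrite mem_chain_add !inE.
by case: (t =P s) => [->|]; rewrite ?sa.
Qed.

Lemma odd_card_chain_add a b : odd #|chain_add a b| = odd #|a| (+) odd #|b|.
Proof.
have disj : (a :\: b) :&: (b :\: a) = set0.
  by apply/setP => s; rewrite !inE; case: (s \in a); case: (s \in b).
rewrite cardsU disj cards0 subn0 -(cardsID b a) -(cardsID a b) (setIC b a) !oddD.
by case: (odd #|a :&: b|); case: (odd #|a :\: b|); case: (odd #|b :\: a|).
Qed.

Lemma lin_add G a b : lin G (chain_add a b) = chain_add (lin G a) (lin G b).
Proof.
apply/setP => t; rewrite mem_chain_add !inE -odd_card_chain_add.
congr (odd #|pred_of_set _|); apply/setP => s; rewrite !mem_chain_add !inE.
by case: (t \in G s); case: (s \in a); case: (s \in b).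
Qed.

Lemma lin_cycle_add G a b : lin G a = lin G b -> lin G (chain_add a b) = set0.
Proof. by move=> e; rewrite lin_add e chain_addxx. Qed.

Lemma lin_set0 G : lin G set0 = set0.
Proof.
apply/setP => t; rewrite !inE (_ : [set s in set0 | _] = set0) ?cards0 //.
by apply/setP => s; rewrite !inE.
Qed.

Lemma lin_set1 G s : lin G [set s] = G s.
Proof.
apply/setP => t; rewrite inE.
have -> : [set u in [set s] | t \in G u] = if t \in G s then [set s] else set0.
  by case tG: (t \in G s); apply/setP => u; rewrite !inE; case: (u =P s) => // ->.
by case: (t \in G s); rewrite ?cards1 ?cards0.
Qed.

Lemma lin_setD1 G c s : s \in c -> lin G c = chain_add (G s) (lin G (c :\ s)).
Proof. by move=> sc; rewrite -lin_set1 -lin_add chain_add1D. Qed.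

Lemma lin_subset G c A : (forall s, s \in c -> G s \subset A) -> lin G c \subset A.
Proof.
move=> GA; apply/subsetP => t; rewrite inE => odd_t.
have : [set s in c | t \in G s] != set0 by apply: contraTneq odd_t => ->; rewrite cards0.
by case/set0Pn => s; rewrite inE => /andP[sc tG]; exact: subsetP (GA s sc) t tG.
Qed.

Lemma lin_setI G c A B :
  (forall s t, t \in G s -> (s \in A) = (t \in B)) -> lin G (c :&: A) = lin G c :&: B.
Proof.
move=> GAB; apply/setP => t; rewrite !inE; case tB: (t \in B).
  rewrite andbT; congr (odd #|pred_of_set _|); apply/setP => s; rewrite !inE.
  by case tG: (t \in G s); rewrite ?andbF // (GAB _ _ tG) tB andbT.
rewrite andbF (_ : [set s in _ | _] = set0) ?cards0 //.
apply/setP => s; rewrite !inE; case tG: (t \in G s); rewrite ?andbF //.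
by rewrite (GAB _ _ tG) tB andbF.
Qed.

End Chains.

Section Complexes.
Variables (V : finType) (K : {set {set V}}).
Hypothesis HK : is_complex K.
Implicit Types (s t u x : {set V}) (c d : {set {set V}}).

Lemma complex_card_gt0 s : s \in K -> 0 < #|s|.
Proof. by case: HK => K0 _ sK; rewrite card_gt0; apply: contraNneq K0 => <-. Qed.

Lemma complex_face s t : s \in K -> t \subset s -> 0 < #|t| -> t \in K.
Proof. by case: HK => _ K_closed sK ts; rewrite card_gt0; exact: K_closed sK ts. Qed.

Lemma free_pair_card s t : free_pair K s t -> #|t| = #|s|.+1.
Proof.
case=> st [_ [tK free]]; have [sub_st [v vt vs]] := properP st.
have vsK : v |: s \in K.
  apply: complex_face tK _ _; last by rewrite cardsU1 vs.
  by rewrite subUset sub1set vt sub_st.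
case: (free _ vsK (subsetUr _ _)) => [vs_s | <-]; last by rewrite cardsU1 vs.
by move: vs; rewrite -vs_s setU11.
Qed.

Lemma card_interval2 x t : x \subset t -> #|t| = #|x|.+2 ->
  #|[set u : {set V} | [&& x \subset u, u \subset t & #|u| == #|x|.+1]]| = 2.
Proof.
move=> xt ct.
have -> : [set u : {set V} | [&& x \subset u, u \subset t & #|u| == #|x|.+1]]
    = (fun v => v |: x) @: (t :\: x).
  apply/setP => u; rewrite inE; apply/and3P/imsetP.
  - case=> xu ut /eqP cu.
    have : x \proper u by rewrite properEcard xu cu ltnSn.
    case/properP => _ [v vu vx]; exists v; first by rewrite inE vx (subsetP ut).
    by apply/eqP; rewrite eq_sym eqEcard subUset sub1set vu xu /= cardsU1 vx cu.
  - case=> v; rewrite inE => /andP[vx vt] ->.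
    by rewrite subsetUr subUset sub1set vt xt cardsU1 vx.
rewrite card_in_imset; first by rewrite cardsD (setIidPr xt); lia.
move=> v w; rewrite !inE => /andP[vx _] /andP[wx _] e.
by have := setU11 v x; rewrite e in_setU1 (negbTE vx) orbF => /eqP.
Qed.

(* Each coefficient counts the simplices strictly between two simplices of
   codimension two, and there are exactly two of them. *)
Lemma bd_bd1 t : t \in K -> bd K (bd1 K t) = set0.
Proof.
move=> tK; apply/setP => x; rewrite !inE.
set P := [set s in bd1 K t | x \in bd1 K s].
have [->|[s0]] := set_0Vmem P; first by rewrite cards0.
rewrite !inE => /andP[/and3P[_ s0t /eqP cs0] /and3P[xK xs0 /eqP cx]].
have x_gt0 := complex_card_gt0 xK.
have -> : P = [set u : {set V} | [&& x \subset u, u \subset t & #|u| == #|x|.+1]].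
  apply/setP => u; rewrite !inE; apply/idP/idP.
  - by case/andP => /and3P[_ ut /eqP cu] /and3P[_ xu /eqP cxu];
      rewrite xu ut /=; apply/eqP; lia.
  - case/and3P => xu ut /eqP cu.
    rewrite (complex_face tK ut) ?cu // ut xK xu /=; apply/andP; split; apply/eqP; lia.
by rewrite card_interval2 //; [exact: subset_trans xs0 s0t | lia].
Qed.

Lemma cobd_cobd1 s : cobd K (cobd1 K s) = set0.
Proof.
apply/setP => x; rewrite !inE.
set P := [set u in cobd1 K s | x \in cobd1 K u].
have [->|[t0]] := set_0Vmem P; first by rewrite cards0.
rewrite !inE => /andP[/and3P[_ st0 /eqP ct0] /and3P[xK t0x /eqP cx]].
have -> : P = [set u : {set V} | [&& s \subset u, u \subset x & #|u| == #|s|.+1]].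
  apply/setP => u; rewrite !inE; apply/idP/idP.
  - by case/andP => /and3P[_ su /eqP cu] /and3P[_ ux /eqP cxu];
      rewrite su ux /=; apply/eqP; lia.
  - case/and3P => su ux /eqP cu.
    rewrite (complex_face xK ux) ?cu // ux xK su /=; apply/andP; split; apply/eqP; lia.
by rewrite card_interval2 //; [exact: subset_trans st0 t0x | lia].
Qed.

(* Only the simplices of [d] of the right dimension contribute to [bd K d]. *)
Lemma Bp_of_bd p c d : c \subset Kdim K p -> d \subset K -> bd K d = c -> Bp K p c.
Proof.
move=> cp dK dc; split => //; exists (d :&: [set u : {set V} | #|u| == p.+2]); split.
  by apply/subsetP => u; rewrite !inE => /andP[/(subsetP dK) -> ->].
move: dc; rewrite /bd (@lin_setI _ _ _ _ [set u : {set V} | #|u| == p.+1]) => [->|].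
  apply/setIidPl/subsetP => u /(subsetP cp); rewrite !inE => /andP[_ ->] //.
move=> s u; rewrite !inE => /and3P[uK _ /eqP cu].
by have := complex_card_gt0 uK; lia.
Qed.

Lemma coBp_of_cobd p c d : c \subset Kdim K p -> d \subset K -> cobd K d = c -> coBp K p c.
Proof.
move=> cp dK dc; split => //; exists (d :&: [set u : {set V} | #|u| == p]); split.
  by apply/subsetP => u; rewrite !inE => /andP[/(subsetP dK) -> ->].
move: dc; rewrite /cobd (@lin_setI _ _ _ _ [set u : {set V} | #|u| == p.+1]) => [->|].
  apply/setIidPl/subsetP => u /(subsetP cp); rewrite !inE => /andP[_ ->] //.
by move=> s u; rewrite !inE => /and3P[_ _ /eqP ->]; rewrite eqSS.
Qed.

End Complexes.

Section Filtration.
Variables (V : finType) (D F : {set V} -> {set {set V}}).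
Implicit Types (c : {set {set V}}) (s x y nu : {set V}).

Record critical_step (S S' : {set {set V}}) nu : Prop := CriticalStep {
  critical_rest : S = S' :\ nu;
  critical_mem : nu \in S';
  critical_ref : F nu = [set nu] }.

Record collapse_step (S S' : {set {set V}}) x y : Prop := CollapseStep {
  collapse_rest : S = S' :\: [set x; y];
  collapse_mem : y \in S';
  collapse_face : x \in D y;
  collapse_faces : D y :\ x \subset S;
  collapse_free : forall u, u \in S' -> x \in D u -> u = y;
  collapse_DD : lin D (D y) = set0;
  collapse_ref : F y = set0;
  collapse_ref_faces : lin F (D y) = set0 }.

Definition elementary_step (S S' : {set {set V}}) :=
  (exists nu, critical_step S S' nu) \/ (exists x y, collapse_step S S' x y).

Lemma elementary_step_subset (S S' : {set {set V}}) : elementary_step S S' -> S \subset S'.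
Proof. by case=> [[nu [-> _ _]] | [x [y [-> *]]]]; exact: subsetDl. Qed.

Lemma critical_step_cycle (S S' : {set {set V}}) nu c :
    critical_step S S' nu -> (forall s, s \in S -> F s \subset S) ->
  c \subset S' -> lin F c = set0 -> c \subset S.
Proof.
case=> -> nuS' Fnu FS cS' Fc; rewrite subsetD1 cS' /=; apply/negP => nuc.
have FcD : lin F (c :\ nu) \subset S' :\ nu.
  by apply: lin_subset => s /(subsetP (setSD _ cS')); exact: FS.
have : nu \in lin F c.
  rewrite (lin_setD1 _ nuc) mem_chain_add Fnu set11 /=.
  by apply/negP => /(subsetP FcD); rewrite !inE eqxx.
by rewrite Fc inE.
Qed.

Section Collapse.
Variables (S S' : {set {set V}}) (x y : {set V}).
Hypothesis Hxy : collapse_step S S' x y.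

(* [y] is the only simplex of [S'] having [x] in its boundary. *)
Lemma collapse_cycle_notin c : c \subset S' -> lin D c = set0 -> y \notin c.
Proof.
case: Hxy => _ _ xDy _ free _ _ _ cS' Dc; apply/negP => yc.
have : x \in lin D c.
  rewrite inE (_ : [set u in c | x \in D u] = [set y]) ?cards1 //.
  apply/setP => u; rewrite !inE; apply/andP/eqP => [[uc xDu] | ->] //.
  exact: free (subsetP cS' u uc) xDu.
by rewrite Dc inE.
Qed.

Lemma collapse_sub c : c \subset S' -> y \notin c -> x \notin c -> c \subset S.
Proof.
case: Hxy => -> _ _ _ _ _ _ _ cS' yc xc; apply/subsetP => u uc.
rewrite !inE (subsetP cS' u uc) andbT.
by apply/norP; split; [apply: contraNneq xc => <- | apply: contraNneq yc => <-].
Qed.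

Lemma collapse_reduce c :
  c \subset S' -> y \notin c -> x \in c -> chain_add c (D y) \subset S.
Proof.
case: Hxy => -> _ xDy Dy _ _ _ _ cS' yc xc; apply/subsetP => u; rewrite mem_chain_add.
case uc: (u \in c); case uD: (u \in D y) => //= _.
  rewrite !inE (subsetP cS' u uc) andbT; apply/norP; split.
    by apply: contraFneq uD => ->.
  by apply: contraNneq yc => <-.
by apply: (subsetP Dy); rewrite !inE uD andbT; apply: contraFneq uc => ->.
Qed.

End Collapse.

Variables (S : nat -> {set {set V}}) (n : nat).
Hypothesis S0 : S 0 = set0.
Hypothesis S_step : forall i, i < n -> elementary_step (S i) (S i.+1).

Lemma filtration_ref_closed i s : i <= n -> s \in S i -> F s \subset S i.
Proof.
elim: i s => [|i IH] s lein; first by rewrite S0 inE.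
have sub := elementary_step_subset (S_step lein).
case: (boolP (s \in S i)) => [sSi _ | sSi sSi1].
  exact: subset_trans (IH s (ltnW lein) sSi) sub.
case: (S_step lein) => [[nu [E _ Fnu]] | [x [y [E _ xDy Dy _ _ Fy FDy]]]].
  have /eqP snu : s == nu by move: sSi; rewrite E !inE sSi1 andbT negbK.
  by rewrite snu Fnu sub1set -snu.
have /orP[/eqP -> | /eqP ->] : (s == x) || (s == y).
    by move: sSi; rewrite E !inE sSi1 andbT negbK.
  rewrite (lin_setD1 _ xDy) in FDy; rewrite (chain_add_eq0 FDy).
  apply: lin_subset => u /(subsetP Dy) uSi.
  exact: subset_trans (IH u (ltnW lein) uSi) sub.
by rewrite Fy sub0set.
Qed.

Lemma filtration_acyclic i c : i <= n -> c \subset S i ->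
  lin D c = set0 -> lin F c = set0 -> exists2 d : {set {set V}}, d \subset S i & lin D d = c.
Proof.
elim: i c => [|i IH] c lein cS Dc Fc.
  by move: cS; rewrite S0 subset0 => /eqP ->; exists set0; rewrite ?sub0set ?lin_set0.
have sub := elementary_step_subset (S_step lein).
have IH1 c' : c' \subset S i -> lin D c' = set0 -> lin F c' = set0 ->
    exists2 d : {set {set V}}, d \subset S i.+1 & lin D d = c'.
  move=> c'S Dc' Fc'; have [d dS Dd] := IH c' (ltnW lein) c'S Dc' Fc'.
  by exists d => //; exact: subset_trans dS sub.
case: (S_step lein) => [[nu st] | [x [y st]]].
  apply: (IH1 _ _ Dc Fc); apply: critical_step_cycle st _ cS Fc => s.
  exact: filtration_ref_closed (ltnW lein).
have yc := collapse_cycle_notin st cS Dc.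
case: (boolP (x \in c)) => xc; last first.
  by apply: (IH1 _ _ Dc Fc); exact: (collapse_sub st cS yc xc).
have Dc' : lin D (chain_add c (D y)) = set0.
  by rewrite lin_add Dc (collapse_DD st) chain_addxx.
have Fc' : lin F (chain_add c (D y)) = set0.
  by rewrite lin_add Fc (collapse_ref_faces st) chain_addxx.
have [d dS Dd] := IH1 _ (collapse_reduce st cS yc xc) Dc' Fc'.
exists (chain_add d [set y]); first by rewrite chain_add_sub // sub1set (collapse_mem st).
by rewrite lin_add Dd lin_set1 chain_addK.
Qed.

End Filtration.

Lemma setD_setDK (T : finType) (A B C : {set T}) :
  C \subset B -> A :\: B = (A :\: (B :\: C)) :\: C.
Proof. by move=> CB; rewrite setDDl -{1}(setID B C) (setIidPr CB) setUC. Qed.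

Section MorseSequence.
Variables (V : finType) (K : {set {set V}}) (W : seq (step V)).
Hypotheses (HK : is_complex K) (HM : Morse_seq W K).
Local Notation n := (size W).
Local Notation K_ := (Kpref W).

Lemma Kpref0 : K_ 0 = set0.
Proof. by rewrite /Kpref take0 big_nil. Qed.

Lemma Kpref_size : K_ n = K.
Proof. by case: HM. Qed.

Lemma Kpref_sub i : K_ i \subset K.
Proof. by rewrite -Kpref_size /Kpref take_size -{2}(cat_take_drop i W) big_cat subsetUl. Qed.

Lemma Morse_step i : i < n -> is_complex (K_ i.+1) /\
  match nth (inl set0) W i with
  | inl nu => facet (K_ i.+1) nu /\ K_ i = K_ i.+1 :\ nu
  | inr (s, t) => free_pair (K_ i.+1) s t /\ K_ i = K_ i.+1 :\: [set s; t]
  end.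
Proof. by case: HM => _; apply. Qed.

Lemma Morse_fill i nu : i < n -> nth (inl set0) W i = inl nu ->
  [/\ nu \in K_ i.+1, K_ i = K_ i.+1 :\ nu & critical W nu].
Proof.
move=> lt Wi; have [_] := Morse_step lt; rewrite Wi => -[[nuK _] E].
by split => //; rewrite /critical -Wi mem_nth.
Qed.

Lemma Morse_expansion i a b : i < n -> nth (inl set0) W i = inr (a, b) ->
  [/\ free_pair (K_ i.+1) a b, #|b| = #|a|.+1, K_ i = K_ i.+1 :\: [set a; b],
      is_complex (K_ i.+1) & inr (a, b) \in W].
Proof.
move=> lt Wi; have [HK1] := Morse_step lt; rewrite Wi => -[ab E].
by split => //; [exact: (free_pair_card HK1 ab) | rewrite -Wi mem_nth].
Qed.

Lemma Morse_homology_step ref i : is_reference W K ref -> i < n ->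
  elementary_step (bd1 K) ref (K_ i) (K_ i.+1).
Proof.
move=> [_ [ref_crit ref_up]] lt.
case Wi: (nth (inl set0) W i) => [nu | [a b]].
  have [nuK1 E crit] := Morse_fill lt Wi.
  have nuK : nu \in K by apply: (subsetP (Kpref_sub i.+1)).
  by left; exists nu; split => //; exact: ref_crit.
have [[ab [aK1 [bK1 free]]] cb E HK1 inW] := Morse_expansion lt Wi.
have [aK bK] : a \in K /\ b \in K by split; apply: (subsetP (Kpref_sub i.+1)).
have a_gt0 := complex_card_gt0 HK aK.
have [ref_b ref_bd_b] := ref_up b bK (introT existsP (ex_intro _ a inW)).
right; exists a, b; split => //.
- by rewrite !inE aK proper_sub //= cb subn1.
- apply/subsetP => u; rewrite !inE => /andP[ua /and3P[uK ub /eqP cu]].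
  rewrite E !inE (negbTE ua) (complex_face HK1 bK1 ub (complex_card_gt0 HK uK)) andbT /=.
  by apply/eqP => ubE; move: cu; rewrite ubE; lia.
- move=> u uK1; rewrite !inE => /and3P[_ au /eqP cau].
  by case: (free u uK1 au) => // ua; move: cau; rewrite ua; lia.
- exact: bd_bd1.
Qed.

Lemma Morse_cohomology_step coref i : is_coreference W K coref -> i < n ->
  elementary_step (cobd1 K) coref (K :\: K_ i.+1) (K :\: K_ i).
Proof.
move=> [_ [coref_crit coref_low]] lt.
case Wi: (nth (inl set0) W i) => [nu | [a b]].
  have [nuK1 E crit] := Morse_fill lt Wi.
  have nuK : nu \in K by apply: (subsetP (Kpref_sub i.+1)).
  left; exists nu; split; last exact: coref_crit.
    by rewrite E -setD_setDK // sub1set.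
  by rewrite E !inE eqxx nuK.
have [[ab [aK1 [bK1 free]]] cb E HK1 inW] := Morse_expansion lt Wi.
have [aK bK] : a \in K /\ b \in K by split; apply: (subsetP (Kpref_sub i.+1)).
have [coref_a coref_cobd_a] := coref_low a aK (introT existsP (ex_intro _ b inW)).
right; exists b, a; split => //.
- by rewrite E setUC -setD_setDK // subUset !sub1set bK1 aK1.
- by rewrite E !inE eqxx aK.
- by rewrite !inE bK proper_sub //= cb.
- apply/subsetP => u; rewrite !inE => /andP[ub /and3P[uK au /eqP cu]].
  rewrite uK andbT; apply/negP => uK1.
  by case: (free u uK1 au) => ua; [move: cu; rewrite ua; lia | rewrite ua eqxx in ub].
- move=> u; rewrite !inE => /andP[uKi uK] /and3P[_ ub /eqP cb'].
  have uK1 := complex_face HK1 bK1 ub (complex_card_gt0 HK uK).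
  move: uKi; rewrite E !inE uK1 andbT negbK => /orP[/eqP // | /eqP ubE].
  by move: cb'; rewrite ubE; lia.
- exact: cobd_cobd1.
Qed.

Lemma Morse_bd_acyclic ref (c : {set {set V}}) : is_reference W K ref ->
  c \subset K -> bd K c = set0 -> lin ref c = set0 ->
  exists2 d : {set {set V}}, d \subset K & bd K d = c.
Proof.
move=> Href; have := filtration_acyclic Kpref0 (fun i => Morse_homology_step Href) (leqnn n).
by rewrite Kpref_size; apply.
Qed.

Lemma Morse_cobd_acyclic coref (c : {set {set V}}) : is_coreference W K coref ->
  c \subset K -> cobd K c = set0 -> lin coref c = set0 ->
  exists2 d : {set {set V}}, d \subset K & cobd K d = c.
Proof.
move=> Hcoref; set S := fun k => K :\: K_ (n - k).
have S0 : S 0 = set0 by rewrite /S subn0 Kpref_size setDv.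
have S_step k : k < n -> elementary_step (cobd1 K) coref (S k) (S k.+1).
  move=> lt; rewrite /S (_ : n - k = (n - k.+1).+1); last by lia.
  by apply: (Morse_cohomology_step Hcoref); lia.
have := filtration_acyclic S0 S_step (leqnn n).
by rewrite /S subnn Kpref0 setD0; apply.
Qed.

End MorseSequence.

Theorem theorem8 (V : finType) (K : {set {set V}}) (W : seq (step V))
    (ref coref : {set V} -> {set {set V}}) (p : nat) :
  is_complex K -> Morse_seq W K ->
  is_reference W K ref -> is_coreference W K coref ->
  (forall z z' : {set {set V}}, Zp K p z -> Zp K p z' ->
     lin ref z = lin ref z' -> Bp K p (chain_add z z')) /\
  (forall z z' : {set {set V}}, coZp K p z -> coZp K p z' ->
     lin coref z = lin coref z' -> coBp K p (chain_add z z')).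
Proof.
move=> HK HM Href Hcoref.
have Kdim_sub : Kdim K p \subset K by apply/subsetP => s; rewrite inE => /andP[].
split=> z z' [zp zD] [z'p z'D] e; have cp := chain_add_sub zp z'p.
- have [d dK dD] := Morse_bd_acyclic HK HM Href (subset_trans cp Kdim_sub)
    (lin_cycle_add (etrans zD (esym z'D))) (lin_cycle_add e).
  exact: (Bp_of_bd HK cp dK dD).
- have [d dK dD] := Morse_cobd_acyclic HK HM Hcoref (subset_trans cp Kdim_sub)
    (lin_cycle_add (etrans zD (esym z'D))) (lin_cycle_add e).
  exact: (coBp_of_cobd cp dK dD).
Qed.
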